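(* Let $d$ be a positive integer and $S$ any finite set of points in $\mathbb{R}^d$ (not necessarily in general position). Then the Radon partition graph $G_T[S,2]$ is connected.
   Context: A Radon partition of a finite set $S\subset\mathbb{R}^d$ is a partition of $S$ into two nonempty disjoint parts $P_1,P_2$ (unordered) with $\operatorname{conv}(P_1)\cap\operatorname{conv}(P_2)\neq\emptyset$. For two partitions $P,P'$ of $S$, the partition distance $D(P,P')$ is the minimum number of elements of $S$ that must be removed so that $P$ and $P'$ restricted to the remaining elements coincide. The Radon partition graph $G_T[S,2]$ has as vertices all Radon partitions of $S$, with an edge between $P$ and $P'$ if and only if $D(P,P')=1$. A graph with zero or one vertex is considered connected. *)

From HB Require Import structures.
From mathcomp Require Import all_boot all_order all_algebra.
From mathcomp Require Import finmap.
From mathcomp Require Import reals.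
Set Implicit Arguments. Unset Strict Implicit. Unset Printing Implicit Defensive.
Import Order.TTheory GRing.Theory Num.Theory.
Local Open Scope ring_scope.

(* Points of R^d are row vectors 'rV[R]_d; a finite point set S is an
   fset of such vectors; its elements form the finite type S. *)

Section Radon.
Variables (R : realType) (d : nat) (S : {fset 'rV[R]_d}).

Definition in_conv (A : {set S}) (x : 'rV[R]_d) : Prop :=
  exists w : S -> R,
    [/\ forall i, 0 <= w i,
        forall i, i \notin A -> w i = 0,
        \sum_(i : S) w i = 1
      & \sum_(i : S) w i *: (val i) = x].

Definition radon_partition (P : {set {set S}}) : Prop :=
  [/\ partition P [set: S], #|P| = 2%N &
      exists A B, [/\ A \in P, B \in P, A != B &
                      exists x, in_conv A x /\ in_conv B x]].

Definition restrict (P : {set {set S}}) (X : {set S}) : {set {set S}} :=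
  [set B :&: X | B in P] :\ set0.

(* partition distance: minimal number of removed elements after which the
   restricted partitions coincide (removing everything always works). *)
Definition partition_distance (P P' : {set {set S}}) : nat :=
  \big[minn/#|[set: S]|]_(X : {set S} | restrict P (~: X) == restrict P' (~: X))
     #|X|.

Definition radon_adj (P P' : {set {set S}}) : bool :=
  partition_distance P P' == 1%N.

Definition radon_graph_connected : Prop :=
  forall P P', radon_partition P -> radon_partition P' ->
    exists s : seq {set {set S}},
      [/\ forall Q, Q \in s -> radon_partition Q,
          path radon_adj P s & last P s = P'].

End Radon.

From mathcomp Require Import all_boot all_order all_algebra.
From mathcomp Require Import finmap.
From mathcomp Require Import reals.
From mathcomp Require Import ring lra.
Set Implicit Arguments. Unset Strict Implicit. Unset Printing Implicit Defensive.
Import Order.TTheory GRing.Theory Num.Theory.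
Local Open Scope ring_scope.

(* A partition {A, ~A} of S is Radon exactly when some affine dependence v of
   the points (sum v = 0, sum v_i s_i = 0, v <> 0) is positive only on A and
   negative only off A: the normalised positive and negative parts of v are
   two convex combinations of the same point.  Partitions separated by one
   dependence v are joined in G_T by moving the points where v vanishes one at
   a time, and two dependences v, w with v_i w_i >= 0 everywhere separate a
   common partition.  In general, for a well chosen c > 0 the dependence
   c v + w has weakly the sign pattern of v but strictly fewer sign conflicts
   with w than v has, so induction on the number of conflicts connects any two
   Radon partitions. *)

Section SignVectors.
Variables (R : realDomainType) (I : finType).
Implicit Types v w : I -> R.

Lemma sum_eq0_sign v i0 : \sum_i v i = 0 -> v i0 != 0 ->
  (exists i, 0 < v i) /\ (exists j, v j < 0).
Proof.
have pos (u : I -> R) : \sum_i u i = 0 -> u i0 != 0 -> exists i, 0 < u i.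
  move=> u0 ui0; apply/existsP; apply: contraNT ui0 => /existsPn u_le0.
  rewrite -oppr_eq0; apply/eqP.
  apply: (psumr_eq0P (P := predT) (F := fun i => - u i)) => [i _||//].
    by rewrite oppr_ge0 leNgt u_le0.
  by rewrite sumrN u0 oppr0.
move=> v0 vi0; split; first exact: pos.
have [||j] := pos (fun i => - v i); last by rewrite oppr_gt0; exists j.
- by rewrite sumrN v0 oppr0.
- by rewrite oppr_eq0.
Qed.

Lemma sum_max0_eq (V : lmodType R) v (f : I -> V) : \sum_i v i *: f i = 0 ->
  \sum_i Num.max (v i) 0 *: f i = \sum_i Num.max (- v i) 0 *: f i.
Proof.
move=> vf0; apply/eqP; rewrite -subr_eq0 -sumrB; apply/eqP.
rewrite -[RHS]vf0; apply: eq_bigr => i _.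
rewrite -scalerBl; congr (_ *: _).
by case: (ltrgt0P (v i)) => ?; case: (ltrgt0P (- v i)) => ?; lra.
Qed.

Definition conflicts v w := [set i | v i * w i < 0].

End SignVectors.

Lemma shrink_conflicts (R : realFieldType) (I : finType) (v w : I -> R) i1 :
  i1 \in conflicts v w ->
  exists2 c : R, 0 < c & (forall j, 0 <= v j * (c * v j + w j)) /\
    conflicts (fun j => c * v j + w j) w \proper conflicts v w.
Proof.
rewrite inE => conf_i1.
case: (arg_maxP (fun j => - w j / v j) (P := fun j => v j * w j < 0) conf_i1).
(* c is the largest ratio -w_j/v_j over the conflicts: c v + w vanishes at
   its argmax i0 and cannot change sign against v anywhere else. *)
move=> i0 conf_i0 max_i0; set c := - w i0 / v i0.
have nz j : v j * w j < 0 -> v j != 0.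
  by apply: contraTneq => ->; rewrite mul0r ltxx.
have c_sq : c * v i0 ^+ 2 = - (v i0 * w i0) by rewrite /c; field; apply: nz.
have u_i0 : c * v i0 + w i0 = 0 by rewrite /c; field; apply: nz.
have c_gt0 : 0 < c by nra.
exists c => //; split => [j|].
  have [vw_ge0|conf_j] := leP 0 (v j * w j); first nra.
  have sq : - w j / v j * v j ^+ 2 = - (v j * w j) by field; apply: nz.
  have := ler_wpM2r (sqr_ge0 (v j)) (max_i0 j conf_j); rewrite sq -/c; nra.
apply/properP; split.
  by apply/subsetP => j; rewrite !inE; apply: contraTT; rewrite -!leNgt; nra.
by exists i0; rewrite !inE // u_i0 mul0r ltxx.
Qed.

Section Bipartition.
Variable T : finType.
Implicit Types A B : {set T}.

Definition bipart A : {set {set T}} := [set A; ~: A].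

Lemma bipartC A : bipart (~: A) = bipart A.
Proof. by rewrite /bipart setCK setUC. Qed.

Lemma setC_neq (x : T) A : A != ~: A.
Proof. by apply/eqP => /setP/(_ x); rewrite inE; case: (x \in A). Qed.

Lemma card_bipart (x : T) A : #|bipart A| = 2%N.
Proof. by rewrite cards2 (setC_neq x). Qed.

Lemma bipart_partition A : set0 \notin bipart A -> partition (bipart A) [set: T].
Proof.
move=> bip0; apply/and3P; split => //.
- have [x _] : exists x, x \in A.
    by apply/set0Pn; apply: contraNneq bip0 => <-; rewrite !inE eqxx.
  by rewrite /cover big_setU1 ?big_set1 /= ?setUCr // inE (setC_neq x).
- apply/trivIsetP => B C; rewrite !inE => /orP[]/eqP-> /orP[]/eqP->.
  all: by rewrite ?eqxx // disjoints_subset ?setCK.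
Qed.

Lemma partition2_bipart (P : {set {set T}}) A B :
  partition P [set: T] -> #|P| = 2%N -> A \in P -> B \in P -> A != B ->
  B = ~: A /\ P = bipart A.
Proof.
case/and3P=> /eqP covP /trivIsetP trivP _ P2 AP BP AB.
have PAB : P = [set A; B].
  apply/eqP; rewrite eq_sym eqEcard cards2 AB P2 andbT.
  by apply/subsetP => C; rewrite !inE => /orP[]/eqP->.
have BC : B = ~: A.
  apply/setP=> x; rewrite inE; have [xA|xNA] := boolP (x \in A).
    exact: disjointFr (trivP A B AP BP AB) xA.
  have : x \in cover P by rewrite covP inE.
  by case/bigcupP=> C; rewrite PAB !inE => /orP[]/eqP->; rewrite ?(negbTE xNA).
by rewrite /bipart -BC.
Qed.

End Bipartition.

Section RadonGraph.
Variables (R : realType) (d : nat) (S : {fset 'rV[R]_d}).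
Implicit Types (v w : S -> R) (A B : {set S}) (P Q : {set {set S}}).

Definition affine_dep v :=
  [/\ \sum_i v i = 0, \sum_i v i *: val i = 0 & exists i, v i != 0].

Definition separates v A :=
  forall i, (0 < v i -> i \in A) /\ (v i < 0 -> i \notin A).

Lemma affine_depN v : affine_dep v -> affine_dep (fun i => - v i).
Proof.
case=> v0 vx0 [i vi0]; split; last by exists i; rewrite oppr_eq0.
  by rewrite sumrN v0 oppr0.
by under eq_bigr do rewrite scaleNr; rewrite sumrN vx0 oppr0.
Qed.

Lemma separatesN v A : separates v A -> separates (fun i => - v i) (~: A).
Proof.
move=> sepA i; rewrite inE negbK oppr_gt0 oppr_lt0.
by have [] := sepA i; split.
Qed.

Lemma separates_pos v : separates v [set i | 0 < v i].
Proof. by move=> i; rewrite inE -leNgt; split => // /ltW. Qed.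

Lemma separates_set0 v A : affine_dep v -> separates v A -> set0 \notin bipart A.
Proof.
case=> v0 _ [i0 vi0] sepA; have [[i vi] [j vj]] := sum_eq0_sign v0 vi0.
rewrite !inE negb_or !(eq_sym set0); apply/andP; split; apply/set0Pn.
  by exists i; apply: (sepA i).1.
by exists j; rewrite inE; apply: (sepA j).2.
Qed.

Definition radon_point v :=
  (\sum_i Num.max (v i) 0)^-1 *: \sum_i Num.max (v i) 0 *: val i.

Lemma radon_pointN v : affine_dep v -> radon_point (fun i => - v i) = radon_point v.
Proof.
case=> v0 vx0 _; rewrite /radon_point (sum_max0_eq vx0).
under [in RHS]eq_bigr do rewrite -[Num.max (v _) 0]mulr1.
rewrite (sum_max0_eq (V := R^o) (f := fun _ => 1)); last first.
  by rewrite -[RHS]v0; apply: eq_bigr => i _; rewrite [LHS]mulr1.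
by under [in RHS]eq_bigr do rewrite [_ *: 1]mulr1.
Qed.

Lemma in_conv_radon_point v A : affine_dep v -> separates v A ->
  in_conv A (radon_point v).
Proof.
move=> [v0 _ [i0 vi0]] sepA; have [[i vi] _] := sum_eq0_sign v0 vi0.
have max_ge0 j : 0 <= Num.max (v j) 0 by rewrite le_max lexx orbT.
have sum_gt0 : 0 < \sum_j Num.max (v j) 0.
  by rewrite (bigD1 i) //= ltr_pwDl ?sumr_ge0 // (max_l (ltW vi)).
exists (fun j => (\sum_j Num.max (v j) 0)^-1 * Num.max (v j) 0); split.
- by move=> j; rewrite mulr_ge0 ?invr_ge0 ?(ltW sum_gt0).
- move=> j jNA; rewrite max_r ?mulr0 // leNgt.
  by apply: contra jNA => /(sepA j).1.
- by rewrite -mulr_sumr mulVf ?gt_eqF.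
- by rewrite /radon_point scaler_sumr; apply: eq_bigr => j _; rewrite scalerA.
Qed.

Lemma radon_partition_bipart v A : affine_dep v -> separates v A ->
  radon_partition (bipart A).
Proof.
move=> dv sepA; have [_ _ [x _]] := dv.
split; [exact/bipart_partition/(separates_set0 dv) | exact: card_bipart x _ |].
exists A, (~: A); split; rewrite ?inE ?eqxx ?orbT ?(setC_neq x) //.
exists (radon_point v); split; first exact: in_conv_radon_point.
rewrite -radon_pointN //.
exact: in_conv_radon_point (affine_depN dv) (separatesN sepA).
Qed.

Lemma in_conv_separation A x : in_conv A x -> in_conv (~: A) x ->
  exists2 v, affine_dep v & separates v A.
Proof.
move=> [wA [wA_ge0 wA_out wA1 wAx]] [wB [wB_ge0 wB_out wB1 wBx]].
exists (fun i => wA i - wB i); split.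
- by rewrite sumrB wA1 wB1 subrr.
- by under eq_bigr do rewrite scalerBl; rewrite sumrB wAx wBx subrr.
- have [/existsP[i wAi]|/existsPn wA0] := boolP [exists i, wA i != 0].
    exists i; rewrite (wB_out i) ?subr0 // inE negbK.
    by apply: contraNT wAi => /wA_out ->.
  move/eqP: wA1; rewrite big1 => [|i _]; first by rewrite eq_sym oner_eq0.
  by apply/eqP/negPn/wA0.
- by apply: contraLR => /wA_out ->; rewrite sub0r oppr_gt0 -leNgt.
- move=> wAB_lt0; suff : i \in ~: A by rewrite inE.
  by apply: contraLR wAB_lt0 => /wB_out ->; rewrite subr0 -leNgt.
Qed.

Lemma radon_partition_separated P : radon_partition P ->
  exists A, P = bipart A /\ exists2 v, affine_dep v & separates v A.
Proof.
case=> partP P2 [A [B [AP BP AB [x [xA xB]]]]].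
have [BC PA] := partition2_bipart partP P2 AP BP AB.
by exists A; split => //; apply: in_conv_separation xA _; rewrite -BC.
Qed.

Lemma restrictT P : set0 \notin P -> restrict P [set: S] = P.
Proof.
move=> P0; rewrite /restrict (eq_imset _ (@setIT _)) imset_id.
by apply/setDidPl; rewrite disjoint_sym disjoints1.
Qed.

Lemma restrict_bipart A A' X : A :&: X = A' :&: X ->
  restrict (bipart A) X = restrict (bipart A') X.
Proof.
move=> /setP AX; rewrite /restrict /bipart !imsetU1 !imset_set1.
congr ([set _; _] :\ _); first exact/setP.
apply/setP => i; have := AX i; rewrite !inE.
by case: (i \in X); rewrite ?andbT ?andbF // => ->.
Qed.

Lemma radon_adj_restrict1 P P' z : P != P' -> set0 \notin P -> set0 \notin P' ->
  restrict P (~: [set z]) = restrict P' (~: [set z]) -> radon_adj P P'.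
Proof.
move=> PP' P0 P'0 PP'z; rewrite /radon_adj /partition_distance eqn_leq.
apply/andP; split.
  by rewrite -[leqRHS](cards1 z) -minEnat -leEnat; apply: bigmin_le_cond; rewrite PP'z.
apply: (big_ind (fun n => 0 < n)%N) => [|m n m_gt0 n_gt0|X].
- by apply/card_gt0P; exists z.
- by rewrite leq_min m_gt0.
- apply: contraTT; rewrite -leqNgt leqn0 cards_eq0 => /eqP->.
  by rewrite setC0 !restrictT.
Qed.

Definition radon_linked P Q := exists s : seq {set {set S}},
  [/\ forall Q', Q' \in s -> radon_partition Q',
      path (@radon_adj R d S) P s & last P s = Q].

Lemma radon_linked_refl P : radon_linked P P.
Proof. by exists [::]. Qed.

Lemma radon_linked_trans P Q Q' :
  radon_linked P Q -> radon_linked Q Q' -> radon_linked P Q'.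
Proof.
move=> [s [rs ps ls]] [t [rt pt lt]]; exists (s ++ t); split.
- by move=> Q0; rewrite mem_cat => /orP[/rs|/rt].
- by rewrite cat_path ps ls pt.
- by rewrite last_cat ls lt.
Qed.

Lemma radon_linked_cons P Q Q' : radon_partition Q -> radon_adj P Q ->
  radon_linked Q Q' -> radon_linked P Q'.
Proof.
move=> rQ adjPQ [s [rs ps ls]]; exists (Q :: s); split => //=.
- by move=> Q0; rewrite inE => /orP[/eqP->|/rs].
- by rewrite adjPQ.
Qed.

Lemma radon_linked_separates v A B : affine_dep v -> separates v A -> separates v B ->
  radon_linked (bipart A) (bipart B).
Proof.
move=> dv; move: {2}_.+1 (ltnSn #|[set i | (i \in A) != (i \in B)]|) => n.
elim: n A => // n IH A; rewrite ltnS => diff_le sepA sepB.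
have [diff0|[z zdiff]] := set_0Vmem [set i | (i \in A) != (i \in B)].
  suff -> : A = B by apply: radon_linked_refl.
  by apply/setP => i; move/setP: diff0 => /(_ i); rewrite !inE => /negbFE/eqP.
pose A' := [set i | if i == z then i \in B else i \in A].
have sepA' : separates v A' by move=> i; rewrite inE; case: (i == z).
have A'B : radon_linked (bipart A') (bipart B).
  apply: IH sepA' sepB; move: diff_le; rewrite (cardsD1 z) zdiff add1n.
  apply: leq_ltn_trans; apply: subset_leq_card; apply/subsetP => i.
  by rewrite !inE; case: (eqVneq i z) => [->|]; rewrite ?eqxx.
have [AA'|AA'] := eqVneq (bipart A) (bipart A'); first by rewrite AA'.
apply: radon_linked_cons A'B; first exact: radon_partition_bipart dv sepA'.
apply: (radon_adj_restrict1 (z := z) AA').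
- exact: separates_set0 dv sepA.
- exact: separates_set0 dv sepA'.
- apply: restrict_bipart; apply/setP => i; rewrite !inE.
  by case: (eqVneq i z); rewrite ?andbF.
Qed.

Lemma radon_linked_sign_agree v w A B : affine_dep v -> affine_dep w ->
  separates v A -> separates w B -> (forall i, 0 <= v i * w i) ->
  radon_linked (bipart A) (bipart B).
Proof.
move=> dv dw sepA sepB vw_ge0; pose C := [set i | (0 < v i) || (0 < w i)].
have [sepvC sepwC] : separates v C /\ separates w C.
  by split=> i; rewrite !inE negb_or -!leNgt; have := vw_ge0 i; split => ?; nra.
exact: radon_linked_trans (radon_linked_separates dv sepA sepvC)
                          (radon_linked_separates dw sepwC sepB).
Qed.

Lemma radon_linked_dep v w A B : affine_dep v -> affine_dep w ->
  separates v A -> separates w B -> radon_linked (bipart A) (bipart B).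
Proof.
move: {2}_.+1 (ltnSn #|conflicts v w|) => n.
elim: n v A => // n IH v A; rewrite ltnS => conf_le dv dw sepA sepB.
have [conf0|[i1 conf_i1]] := set_0Vmem (conflicts v w).
  apply: (radon_linked_sign_agree dv dw sepA sepB) => i.
  by have := in_set0 i; rewrite -conf0 inE => /negbT; rewrite -leNgt.
have [c c_gt0 [vu_ge0 conf_lt]] := shrink_conflicts conf_i1.
pose u i := c * v i + w i.
have [/existsP[j uj]|/existsPn u0] := boolP [exists j, u j != 0].
- have du : affine_dep u.
    case: dv dw => v0 vx0 _ [w0 wx0 _]; split; last by exists j.
      by rewrite big_split /= -mulr_sumr v0 w0 mulr0 addr0.
    under eq_bigr do rewrite scalerDl -scalerA.
    by rewrite big_split /= -scaler_sumr vx0 wx0 scaler0 addr0.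
  have sepu := separates_pos u.
  apply: radon_linked_trans (radon_linked_sign_agree dv du sepA sepu vu_ge0) _.
  apply: IH du dw sepu sepB.
  exact: leq_trans (proper_card conf_lt) conf_le.
- (* c v + w = 0: w is a negative multiple of v *)
  have sepB' : separates v (~: B).
    move=> i; have := u0 i; rewrite negbK /u => /eqP ui0; rewrite inE negbK.
    have [wi_gt0 wi_lt0] := sepB i; split => ?; [apply: wi_lt0 | apply: wi_gt0]; nra.
  by rewrite -(bipartC B); apply: radon_linked_separates dv sepA sepB'.
Qed.

End RadonGraph.

Theorem theorem4p1 (R : realType) (d : nat) (S : {fset 'rV[R]_d}) :
  (0 < d)%N -> radon_graph_connected S.
Proof.
move=> _ P P' /radon_partition_separated[A [-> [v dv sepA]]].
move=> /radon_partition_separated[B [-> [w dw sepB]]].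
exact: radon_linked_dep dv dw sepA sepB.
Qed.
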